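(* Let $S_X,S_Y$ be finite nonempty action sets and $\varphi:S_X\times S_Y\to\mathbb{R}$. Suppose $\varphi\equiv0$ is enforceable with $\lambda_{\min}=1$, i.e., there is a $(\varphi,1)$-autocratic behavioral strategy for $X$ but no $(\varphi,\lambda)$-autocratic behavioral strategy for any $\lambda\in[0,1)$. Then there exist $\tau_X^+,\tau_X^-\in\Delta(S_X)$ such that $$\max_{s_Y}\varphi(\tau_X^+,s_Y)>\min_{s_Y}\varphi(\tau_X^+,s_Y)=0=\max_{s_Y}\varphi(\tau_X^-,s_Y)>\min_{s_Y}\varphi(\tau_X^-,s_Y),$$ with maxima and minima over $s_Y\in S_Y$.
   Context: Two players $X,Y$ play a repeated game with finite action sets $S_X,S_Y$; $\Delta(S)$ denotes the probability distributions on $S$; $\varphi(\tau_X,s_Y)=\mathbb{E}_{s_X\sim\tau_X}[\varphi(s_X,s_Y)]$. Histories: $\mathcal{H}=\bigcup_{T\ge0}(S_X\times S_Y)^T$; behavioral strategies are maps $\sigma:\mathcal{H}\to\Delta(S)$; players independently draw actions each round from their strategies evaluated at the history of realized action pairs, with $\mathbb{E}_{\sigma_X,\sigma_Y}$ the expectation over the resulting play. For $\lambda\in[0,1)$, $\sigma_X$ is $(\varphi,\lambda)$-autocratic if for every behavioral strategy $\sigma_Y$, $\mathbb{E}_{\sigma_X,\sigma_Y}[(1-\lambda)\sum_{t\ge0}\lambda^t\varphi(s_X^t,s_Y^t)]=0$; it is $(\varphi,1)$-autocratic if for every $\sigma_Y$ the limit $\lim_{T\to\infty}\frac1{T+1}\sum_{t=0}^T\mathbb{E}_{\sigma_X,\sigma_Y}[\varphi(s_X^t,s_Y^t)]$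 exists and equals $0$. *)

From HB Require Import structures.
From mathcomp Require Import all_boot all_order all_algebra.
From mathcomp Require Import all_classical all_reals all_analysis.
Set Implicit Arguments. Unset Strict Implicit. Unset Printing Implicit Defensive.
Import Order.TTheory GRing.Theory Num.Theory.
Import numFieldNormedType.Exports.
Local Open Scope classical_set_scope.
Local Open Scope ring_scope.

Record dist (R : realType) (S : finType) := Dist {
  pmf :> S -> R;
  pmf_ge0 : forall s, 0 <= pmf s;
  pmf_sum1 : \sum_(s : S) pmf s = 1 }.

(* Histories: finite sequences of realized action pairs, in chronological order. *)
Definition history (SX SY : finType) := seq (SX * SY).

Definition bstrat (R : realType) (SX SY S : finType) :=
  history SX SY -> dist R S.

Fixpoint prob_from (R : realType) (SX SY : finType)
  (sX : bstrat R SX SY SX) (sY : bstrat R SX SY SY)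
  (past : history SX SY) (future : seq (SX * SY)) : R :=
  match future with
  | [::] => 1
  | (a, b) :: f => sX past a * sY past b * prob_from sX sY (rcons past (a, b)) f
  end.

Definition hprob (R : realType) (SX SY : finType)
  (sX : bstrat R SX SY SX) (sY : bstrat R SX SY SY) (h : history SX SY) : R :=
  prob_from sX sY [::] h.

Definition stage_exp (R : realType) (SX SY : finType) (phi : SX -> SY -> R)
  (sX : bstrat R SX SY SX) (sY : bstrat R SX SY SY) (t : nat) : R :=
  \sum_(h : t.-tuple (SX * SY))
     hprob sX sY h * \sum_(a : SX) \sum_(b : SY) sX h a * sY h b * phi a b.

Definition autocratic_disc (R : realType) (SX SY : finType) (phi : SX -> SY -> R)
  (l : R) (sX : bstrat R SX SY SX) : Prop :=
  forall sY : bstrat R SX SY SY,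
    (fun n : nat => \sum_(t < n) (1 - l) * l ^+ t * stage_exp phi sX sY t)
      @ \oo --> (0 : R).

(* (phi, 1)-autocratic: the Cesaro averages of expected payoffs converge to 0. *)
Definition autocratic_avg (R : realType) (SX SY : finType) (phi : SX -> SY -> R)
  (sX : bstrat R SX SY SX) : Prop :=
  forall sY : bstrat R SX SY SY,
    (fun T : nat => (T.+1%:R)^-1 * \sum_(t < T.+1) stage_exp phi sX sY t)
      @ \oo --> (0 : R).

Definition phi_mix (R : realType) (SX SY : finType) (phi : SX -> SY -> R)
  (tau : dist R SX) (sy : SY) : R :=
  \sum_(a : SX) tau a * phi a sy.

From Pilot Require Import Defs.
From HB Require Import structures.
From mathcomp Require Import all_boot all_order all_algebra.
From mathcomp Require Import all_classical all_reals all_analysis.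
Set Implicit Arguments. Unset Strict Implicit. Unset Printing Implicit Defensive.
Import Order.TTheory GRing.Theory Num.Theory.
Import numFieldNormedType.Exports.
Local Open Scope classical_set_scope.
Local Open Scope ring_scope.

(* A mixed action tau with phi(tau, .) = 0 identically, played forever, would be
   (phi, 0)-autocratic, so no such tau exists.  If every tau had a reply s_Y with
   phi(tau, s_Y) < 0, then by compactness of Delta(S_X) these replies could be
   taken uniformly <= -c; Y answering every round in this way keeps all Cesaro
   averages <= -c, contradicting the (phi, 1)-autocratic strategy.  Hence some d1
   has phi(d1, .) >= 0 and, applying this to -phi, some d0 has phi(d0, .) <= 0.
   Along the segment from d0 to d1 the worst payoff min_{s_Y} phi(., s_Y) is
   continuous and changes sign, so by the intermediate value theorem it vanishes
   at some tau+; as phi(tau+, .) is not identically 0 it is positive somewhere.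
   tau- is obtained in the same way from -phi. *)

Lemma sum_dirac (R : pzSemiRingType) (S : finType) (s0 : S) (g : S -> R) :
  \sum_s (s == s0)%:R * g s = g s0.
Proof.
by rewrite (bigD1 s0) //= eqxx mul1r big1 ?addr0 // => s /negbTE ->; rewrite mul0r.
Qed.

Section Distributions.
Variables (R : realType) (S : finType).

Definition dirac_dist (s0 : S) : dist R S.
Proof.
refine (@Dist R S (fun s => (s == s0)%:R) (fun s => ler0n _ _) _).
by rewrite -[RHS](sum_dirac s0 (fun=> 1)) /=; under [RHS]eq_bigr do rewrite mulr1.
Defined.

Definition mix_dist (t : R) (t01 : 0 <= t <= 1) (d0 d1 : dist R S) : dist R S.
Proof.
refine (@Dist R S (fun s => (1 - t) * d0 s + t * d1 s) _ _).
- move=> s; case/andP: t01 => t_ge0 t_le1.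
  by rewrite addr_ge0 ?mulr_ge0 ?subr_ge0 // Defs.pmf_ge0.
- by rewrite big_split /= -!mulr_sumr !Defs.pmf_sum1 !mulr1 subrK.
Defined.

End Distributions.

Section MixedPayoff.
Variables (R : realType) (SX SY : finType) (phi : SX -> SY -> R).

Lemma phi_mix_mix t t01 d0 d1 b :
  phi_mix phi (@mix_dist R SX t t01 d0 d1) b =
  (1 - t) * phi_mix phi d0 b + t * phi_mix phi d1 b.
Proof.
rewrite /phi_mix !mulr_sumr -big_split /=; apply: eq_bigr => a _.
by rewrite mulrDl !mulrA.
Qed.

Lemma phi_mixN tau b :
  phi_mix (fun a b => - phi a b) tau b = - phi_mix phi tau b.
Proof. by rewrite /phi_mix -sumrN; under eq_bigr do rewrite mulrN. Qed.

End MixedPayoff.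

Section BigMin.
Variable R : realType.

Lemma bigmin_attained (I : finType) (g : I -> R) (i0 : I) :
  exists i, \big[Num.min/g i0]_i g i = g i.
Proof.
elim/big_ind: _ => [|_ _ [i ->] [j ->]|i _]; [by exists i0| |by exists i].
by rewrite minEle; case: ifP => _; [exists i | exists j].
Qed.

Lemma continuous_bigmin (T : topologicalType) (I : Type) (r : seq I)
    (g0 : T -> R) (g : I -> T -> R) :
  continuous g0 -> (forall i, continuous (g i)) ->
  continuous (fun x => \big[Num.min/g0 x]_(i <- r) g i x).
Proof.
move=> g0_cont g_cont; elim: r => [|i r IHr].
  by rewrite (_ : (fun x => _) = g0) //; apply/funext => x; rewrite big_nil.
rewrite (_ : (fun x => _) = g i \min (fun x => \big[Num.min/g0 x]_(j <- r) g j x)).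
  by move=> x; apply: continuous_min; [exact: g_cont | exact: IHr].
by apply/funext => x; rewrite big_cons.
Qed.

End BigMin.

Section Simplex.
Variables (R : realType) (n : nat).

Definition simplex : set 'rV[R]_n :=
  [set v | (forall i, 0 <= v ord0 i) /\ \sum_i v ord0 i = 1].

Lemma continuous_linear_form (c : 'I_n -> R) :
  continuous (fun v : 'rV[R]_n => \sum_i v ord0 i * c i).
Proof.
apply: continuous_big => [|i _].
  exact: add_continuous.
by move=> v; apply: continuousM; [exact: coord_continuous | exact: cst_continuous].
Qed.

Lemma simplex_closed : closed simplex.
Proof.
have sum_cont : continuous (fun v : 'rV[R]_n => \sum_i v ord0 i).
  apply: continuous_big => [|i _ v]; first exact: add_continuous.
  exact: coord_continuous.
have -> : simplex = \bigcap_i (fun v => v ord0 i) @^-1` [set x | 0 <= x] `&`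
    (fun v => \sum_i v ord0 i) @^-1` [set 1].
  apply/seteqP; split=> v [v_ge0 v_sum1]; split=> // i.
    by move=> _; apply: v_ge0.
  exact: v_ge0.
apply: closedI; last first.
  apply: preimage_closed; last exact: closed_eq.
  by move=> v _; exact: sum_cont.
apply: closed_bigI => i _.
apply: preimage_closed; last exact: closed_ge.
by move=> v _; exact: coord_continuous.
Qed.

Lemma simplex_compact : compact simplex.
Proof.
apply: (@subclosed_compact _ simplex
  [set v : 'rV[R]_n | forall i, `[(0 : R), 1]%classic (v ord0 i)]).
- exact: simplex_closed.
- by apply: (@rV_compact _ _ (fun=> `[(0 : R), 1]%classic)) => i; exact: segment_compact.
move=> v [v_ge0 v_sum1] i /=; rewrite in_itv /= v_ge0 -v_sum1 (bigD1 i) //= lerDl.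
exact: sumr_ge0.
Qed.

End Simplex.

Arguments simplex {R n}.

Lemma sum_enum_val (V : nmodType) (T : finType) (f : T -> V) :
  \sum_(i < #|T|) f (enum_val i) = \sum_a f a.
Proof.
by rewrite [RHS](reindex (@enum_val T predT)) //; apply: onW_bij; exact: enum_val_bij.
Qed.

Section UniformReply.
Variables (R : realType) (SX SY : finType) (phi : SX -> SY -> R).

(* Delta(S_X) is handled through its copy in 'rV_#|S_X|, where Tychonoff is available. *)
Definition row_of_dist (tau : dist R SX) : 'rV[R]_#|SX| := \row_i tau (enum_val i).

Lemma row_of_dist_simplex tau : simplex (row_of_dist tau).
Proof.
split=> [i|]; first by rewrite mxE Defs.pmf_ge0.
by under eq_bigr do rewrite mxE; rewrite sum_enum_val Defs.pmf_sum1.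
Qed.

Definition dist_of_row (v : 'rV[R]_#|SX|) (v_simplex : simplex v) : dist R SX.
Proof.
case: v_simplex => v_ge0 v_sum1.
refine (@Dist R SX (fun a => v ord0 (enum_rank a)) (fun a => v_ge0 _) _).
by rewrite -v_sum1 -sum_enum_val; under eq_bigr do rewrite enum_valK.
Defined.

Definition payoff_form (b : SY) (v : 'rV[R]_#|SX|) : R :=
  \sum_i v ord0 i * phi (enum_val i) b.

Lemma payoff_form_row tau b : payoff_form b (row_of_dist tau) = phi_mix phi tau b.
Proof. by rewrite /phi_mix -sum_enum_val; apply: eq_bigr => i _; rewrite mxE. Qed.

Lemma phi_mix_dist_of_row v v_simplex b :
  phi_mix phi (@dist_of_row v v_simplex) b = payoff_form b v.
Proof.
case: v_simplex => v_ge0 v_sum1.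
by rewrite /phi_mix -sum_enum_val; apply: eq_bigr => i _; rewrite /= enum_valK.
Qed.

Lemma uniform_negative_reply (a0 : SX) (b0 : SY) :
  (forall tau : dist R SX, exists b, phi_mix phi tau b < 0) ->
  exists2 c, 0 < c & forall tau : dist R SX, exists b, phi_mix phi tau b <= - c.
Proof.
move=> neg_reply.
pose worst v := \big[Num.min/payoff_form b0 v]_b payoff_form b v.
have worst_cont : continuous worst.
  by apply: continuous_bigmin => [|b]; exact: continuous_linear_form.
have simplex_neq0 : (simplex : set 'rV[R]_#|SX|) !=set0.
  by exists (row_of_dist (dirac_dist R a0)); exact: row_of_dist_simplex.
have [v /set_mem v_simplex v_max] := EVT_max_rV simplex_neq0 (@simplex_compact R _)
  (continuous_subspaceT worst_cont).
have [b v_neg] := neg_reply (dist_of_row v_simplex).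
rewrite phi_mix_dist_of_row in v_neg.
exists (- worst v); first by rewrite oppr_gt0 (le_lt_trans (bigmin_le _ b _)).
move=> tau; rewrite opprK.
have [b' worst_at_b'] := bigmin_attained (payoff_form^~ (row_of_dist tau)) b0.
exists b'; rewrite -payoff_form_row -worst_at_b'.
by apply: v_max; rewrite inE; exact: row_of_dist_simplex.
Qed.

End UniformReply.

Section BoundaryMix.
Variables (R : realType) (SX SY : finType) (phi : SX -> SY -> R).

Lemma nonneg_mix_with_zero (b0 : SY) (d0 d1 : dist R SX) :
  (forall b, phi_mix phi d0 b <= 0) -> (forall b, 0 <= phi_mix phi d1 b) ->
  exists tau : dist R SX,
    (forall b, 0 <= phi_mix phi tau b) /\ exists b, phi_mix phi tau b = 0.
Proof.
move=> d0_le0 d1_ge0.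
pose g b t := (1 - t) * phi_mix phi d0 b + t * phi_mix phi d1 b.
pose worst t := \big[Num.min/g b0 t]_b g b t.
have g_cont b : continuous (g b).
  rewrite /g => t; apply: cvgD; apply: cvgM; try apply: cvgB;
    by [exact: cvg_cst | exact: cvg_id].
have [t t01 worst_t] : exists2 t, t \in `[0, 1] & worst t = 0.
  have worst0 : worst 0 <= 0.
    by apply: le_trans (bigmin_le _ b0 _) _; rewrite /g subr0 mul1r mul0r addr0.
  have worst1 : 0 <= worst 1.
    by apply/bigmin_geP; split=> [|b _]; rewrite /g subrr mul0r add0r mul1r.
  apply: IVT; first exact: ler01.
    by apply: continuous_subspaceT; apply: continuous_bigmin.
  by rewrite ge_min worst0 le_max worst1 orbT.
have t01' : 0 <= t <= 1 by rewrite in_itv in t01.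
exists (mix_dist t01' d0 d1); split=> [b|].
  by rewrite phi_mix_mix -worst_t; exact: bigmin_le.
have [b worst_b] := bigmin_attained (g^~ t) b0.
by exists b; rewrite phi_mix_mix -[LHS]/(g b t) -worst_b.
Qed.

Lemma exists_nonneg_boundary_dist (b0 : SY) (d0 d1 : dist R SX) :
  (forall tau : dist R SX, ~ forall b, phi_mix phi tau b = 0) ->
  (forall b, phi_mix phi d0 b <= 0) -> (forall b, 0 <= phi_mix phi d1 b) ->
  exists tau : dist R SX,
    [/\ forall b, 0 <= phi_mix phi tau b, exists b, phi_mix phi tau b = 0
      & exists b, 0 < phi_mix phi tau b].
Proof.
move=> not_equalizer d0_le0 d1_ge0.
have [tau [tau_ge0 tau_zero]] := nonneg_mix_with_zero b0 d0_le0 d1_ge0.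
exists tau; split=> //; apply: contrapT => /forallNP tau_le0.
apply: (not_equalizer tau) => b; apply/eqP; rewrite eq_le tau_ge0 andbT leNgt.
exact/negP/tau_le0.
Qed.

End BoundaryMix.

Lemma sum_tuple_cons (V : nmodType) (T : finType) m (F : seq T -> V) :
  \sum_(f : m.+1.-tuple T) F f = \sum_(x : T) \sum_(f : m.-tuple T) F (x :: f).
Proof.
rewrite pair_bigA /= (reindex (fun p : T * m.-tuple T => [tuple of p.1 :: p.2])) //=.
apply: onW_bij; exists (fun u : m.+1.-tuple T => (thead u, [tuple of behead u])).
  by move=> [x f]; congr pair; apply: val_inj.
by move=> u; apply: val_inj => /=; rewrite [in RHS](tuple_eta u).
Qed.

Section Play.
Variables (R : realType) (SX SY : finType) (phi : SX -> SY -> R).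
Implicit Types (sX : bstrat R SX SY SX) (sY : bstrat R SX SY SY).

Lemma prob_from_ge0 sX sY past f : 0 <= prob_from sX sY past f.
Proof.
elim: f past => [|[a b] f IHf] past /=; first exact: ler01.
by rewrite !mulr_ge0 // Defs.pmf_ge0.
Qed.

Lemma sum_prob_from sX sY t past :
  \sum_(f : t.-tuple (SX * SY)) prob_from sX sY past f = 1.
Proof.
elim: t past => [|t IHt] past.
  rewrite (eq_bigr (fun=> 1)) => [|f _]; last by rewrite tuple0.
  by rewrite sumr_const card_tuple expn0.
rewrite sum_tuple_cons (eq_bigr (fun p => sX past p.1 * sY past p.2)); last first.
  by move=> [a b] _ /=; rewrite -mulr_sumr IHt mulr1.
rewrite -(pair_bigA _ (fun a b => sX past a * sY past b)) /=.
under eq_bigr do rewrite -mulr_sumr Defs.pmf_sum1 mulr1.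
exact: Defs.pmf_sum1.
Qed.

Definition expected_payoff (tX : dist R SX) (tY : dist R SY) : R :=
  \sum_a \sum_b tX a * tY b * phi a b.

Lemma expected_payoffE tX tY :
  expected_payoff tX tY = \sum_b tY b * phi_mix phi tX b.
Proof.
rewrite /expected_payoff exchange_big; apply: eq_bigr => b _.
by rewrite /phi_mix mulr_sumr; apply: eq_bigr => a _; rewrite mulrCA mulrA.
Qed.

Lemma expected_payoff_dirac tX b :
  expected_payoff tX (dirac_dist R b) = phi_mix phi tX b.
Proof. by rewrite expected_payoffE sum_dirac. Qed.

Lemma stage_exp_le sX sY t c :
  (forall h, expected_payoff (sX h) (sY h) <= c) -> stage_exp phi sX sY t <= c.
Proof.
move=> payoff_le; rewrite -[c]mul1r -(sum_prob_from sX sY t [::]) mulr_suml.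
by apply: ler_sum => h _; apply: ler_wpM2l; [exact: prob_from_ge0 | exact: payoff_le].
Qed.

Lemma stage_expN sX sY t :
  stage_exp (fun a b => - phi a b) sX sY t = - stage_exp phi sX sY t.
Proof.
rewrite /stage_exp -sumrN; apply: eq_bigr => h _; rewrite -mulrN -!sumrN.
by congr (_ * _); apply: eq_bigr => a _; rewrite -sumrN; under eq_bigr do rewrite mulrN.
Qed.

End Play.

Lemma cesaro_limit_le (R : realType) (u : nat -> R) (c l : R) :
  (forall t, u t <= c) ->
  (fun T : nat => (T.+1%:R)^-1 * \sum_(t < T.+1) u t) @ \oo --> l -> l <= c.
Proof.
move=> u_le; apply: (closed_cvg (fun x => x <= c)); first exact: closed_le.
apply: nearW => T; rewrite mulrC ler_pdivrMr ?ltr0n //.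
rewrite mulr_natr -[X in c *+ X]card_ord -sumr_const.
by apply: ler_sum => t _; apply: u_le.
Qed.

Section Autocratic.
Variables (R : realType) (SX SY : finType) (phi : SX -> SY -> R).

Lemma autocratic_disc_equalizer (l : R) (tau : dist R SX) :
  (forall b, phi_mix phi tau b = 0) -> autocratic_disc phi l (fun=> tau).
Proof.
move=> tau_eq0 sY; apply: cvg_near_cst; apply: nearW => n.
apply: big1 => t _; rewrite /stage_exp big1 ?mulr0 // => h _.
rewrite [X in _ * X](expected_payoffE phi) big1 ?mulr0 // => b _.
by rewrite tau_eq0 mulr0.
Qed.

Lemma autocratic_avgN (sX : bstrat R SX SY SX) :
  autocratic_avg phi sX -> autocratic_avg (fun a b => - phi a b) sX.
Proof.
move=> sX_avg sY; rewrite (_ : (fun T : nat => _) = fun T : nat =>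
    - ((T.+1%:R)^-1 * \sum_(t < T.+1) stage_exp phi sX sY t)).
  by have := cvgN (sX_avg sY); rewrite oppr0; apply.
apply/funext => T; rewrite -mulrN -sumrN.
by congr (_ * _); apply: eq_bigr => t _; exact: stage_expN.
Qed.

Lemma autocratic_avg_nonneg_dist (a0 : SX) (b0 : SY) (sX : bstrat R SX SY SX) :
  autocratic_avg phi sX -> exists tau : dist R SX, forall b, 0 <= phi_mix phi tau b.
Proof.
move=> sX_avg; apply: contrapT => no_nonneg.
have neg_reply tau : exists b, phi_mix phi tau b < 0.
  apply: contrapT => /forallNP no_neg; apply: no_nonneg; exists tau => b.
  by rewrite leNgt; apply/negP => /(no_neg b).
have [c c_gt0 reply] := uniform_negative_reply a0 b0 neg_reply.
have [best best_reply] := choice reply.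
have : 0 <= - c.
  apply: (cesaro_limit_le _ (sX_avg (fun h => dirac_dist R (best (sX h))))) => t.
  by apply: stage_exp_le => h; rewrite expected_payoff_dirac.
by rewrite oppr_ge0 leNgt c_gt0.
Qed.

End Autocratic.

Section Negation.
Variables (R : realType) (SX SY : finType) (phi : SX -> SY -> R).

Lemma autocratic_avg_nonpos_dist (a0 : SX) (b0 : SY) (sX : bstrat R SX SY SX) :
  autocratic_avg phi sX -> exists tau : dist R SX, forall b, phi_mix phi tau b <= 0.
Proof.
move=> /autocratic_avgN /(autocratic_avg_nonneg_dist a0 b0) [tau tau_ge0].
by exists tau => b; rewrite -oppr_ge0 -phi_mixN.
Qed.

Lemma exists_nonpos_boundary_dist (b0 : SY) (d0 d1 : dist R SX) :
  (forall tau : dist R SX, ~ forall b, phi_mix phi tau b = 0) ->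
  (forall b, phi_mix phi d0 b <= 0) -> (forall b, 0 <= phi_mix phi d1 b) ->
  exists tau : dist R SX,
    [/\ forall b, phi_mix phi tau b <= 0, exists b, phi_mix phi tau b = 0
      & exists b, phi_mix phi tau b < 0].
Proof.
move=> not_equalizer d0_le0 d1_ge0.
have [|b|b|tau [tau_ge0 [z tau_z] [p tau_p]]] :=
  exists_nonneg_boundary_dist (phi := fun a b => - phi a b) b0 (d0 := d1) (d1 := d0).
- move=> tau equalizer; apply: (not_equalizer tau) => b.
  by apply/oppr_inj; rewrite -phi_mixN equalizer oppr0.
- by rewrite phi_mixN oppr_le0.
- by rewrite phi_mixN oppr_ge0.
exists tau; split.
- by move=> b; rewrite -oppr_ge0 -phi_mixN.
- by exists z; apply/oppr_inj; rewrite -phi_mixN oppr0.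
- by exists p; rewrite -oppr_gt0 -phi_mixN.
Qed.

End Negation.

Theorem lemma4 (R : realType) (SX SY : finType)
  (hX : (0 < #|SX|)%N) (hY : (0 < #|SY|)%N) (phi : SX -> SY -> R) :
  (exists sX : bstrat R SX SY SX, autocratic_avg phi sX) ->
  (forall l : R, 0 <= l -> l < 1 ->
     ~ exists sX : bstrat R SX SY SX, autocratic_disc phi l sX) ->
  exists (tp tm : dist R SX),
    (* max_{sY} phi(tp,sY) > min_{sY} phi(tp,sY) = 0 *)
    [/\ (forall sy, 0 <= phi_mix phi tp sy),
        (exists sy, phi_mix phi tp sy = 0) &
        (exists sy, 0 < phi_mix phi tp sy)] /\
    (* 0 = max_{sY} phi(tm,sY) > min_{sY} phi(tm,sY) *)
    [/\ (forall sy, phi_mix phi tm sy <= 0),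
        (exists sy, phi_mix phi tm sy = 0) &
        (exists sy, phi_mix phi tm sy < 0)].
Proof.
move=> [sX sX_avg] no_disc.
have [a0 _] := card_gt0P hX; have [b0 _] := card_gt0P hY.
have not_equalizer (tau : dist R SX) : ~ forall b, phi_mix phi tau b = 0.
  move=> equalizer; apply: (no_disc 0 (lexx 0) ltr01).
  by exists (fun=> tau); exact: autocratic_disc_equalizer.
have [d1 d1_ge0] := autocratic_avg_nonneg_dist a0 b0 sX_avg.
have [d0 d0_le0] := autocratic_avg_nonpos_dist a0 b0 sX_avg.
have [tp tp_spec] := exists_nonneg_boundary_dist b0 not_equalizer d0_le0 d1_ge0.
have [tm tm_spec] := exists_nonpos_boundary_dist b0 not_equalizer d0_le0 d1_ge0.
by exists tp, tm.
Qed.
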